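(* Let $(\Vdash_{\mathcal M},\Vdash)$ be a monadic realizability relation for a syntactic monad $\mathcal M=(\mathsf T,\mathsf{unit},\mathsf{star},\mathsf{merge})$. Let $A_1,\dots,A_k,B$ be closed formulas and $r:|A_1|\to\dots\to|A_k|\to|B|$ a term such that $r\,p_1\cdots p_k\Vdash B$ for all $p_1:|A_1|,\dots,p_k:|A_k|$ with $p_i\Vdash A_i$. Then $\mathsf{raise}^k\,r\,q_1\cdots q_k\Vdash_{\mathcal M}B$ for all $q_1:\|A_1\|,\dots,q_k:\|A_k\|$ with $q_i\Vdash_{\mathcal M}A_i$.
   Context: System $T'$: simply typed $\lambda$-calculus with types built from atomic types (including $\mathsf{Unit},\mathsf{Nat}$) by $\to,\times,+$, constants $\star$, pairing $\langle\cdot,\cdot\rangle$, projections $\pi_1,\pi_2$, injections $\mathrm{inl},\mathrm{inr}$, $\mathrm{case}$, $0$, $\mathrm{succ}$ and a bounded course-of-values recursor, with the usual $\beta$, projection and case reductions; $t\leadsto u$ means $t$ reduces to $u$. $\bar n$ denotes the numeral for $n$. Syntactic monad: $\mathsf T$ a map on types, closed terms $\mathsf{unit}_X:X\to\mathsf TX$, $\mathsf{star}_{X,Y}:(X\to\mathsf TY)\to\mathsf TX\to\mathsf TY$, $\mathsf{merge}_{X,Y}:\mathsf TX\to\mathsf TY\to\mathsf T(X\times Y)$ with $\mathsf{star}\,\mathsf{unit}\,a\leadsto a$, $\mathsf{star}\,f(\mathsf{unit}\,x)\leadsto fx$, $\mathsf{merge}(\mathsf{unit}\,x)(\mathsf{unit}\,y)\leadsto\mathsf{unit}\langle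 x,y\rangle$. $\mathsf{star}^0=\lambda f.f$, $\mathsf{star}^1=\mathsf{star}$, $\mathsf{star}^{k+2}=\lambda f\lambda x\lambda y.\,\mathsf{star}^{k+1}(\lambda z.f(\pi_1z)(\pi_2z))(\mathsf{merge}\,x\,y)$; $\mathsf{raise}^k=\lambda f.\,\mathsf{star}^k(\lambda x_1\dots\lambda x_k.\,\mathsf{unit}(f\,x_1\cdots x_k))$. Formulas are first-order arithmetic formulas with decidable atomic predicates ($\bot$ atomic, never true). Types: $\|A\|=\mathsf T|A|$, $|P|=\mathsf{Unit}$ ($P$ atomic), $|B\wedge C|=|B|\times|C|$, $|B\vee C|=|B|+|C|$, $|\exists xB|=\mathsf{Nat}\times|B|$, $|B\to C|=|B|\to\|C\|$, $|\forall xB|=\mathsf{Nat}\to\|B\|$. A monadic realizability relation is a pair: $\Vdash_{\mathcal M}$ between terms of type $\|A\|$ and closed $A$, and $\Vdash$ between terms of type $|A|$ and closed $A$, with: $r\Vdash P$ iff $r\leadsto\star$ and $P$ true; $r\Vdash B\wedge C$ iff $\pi_1r\Vdash B$ and $\pi_2r\Vdash C$; $r\Vdash B\vee C$ iff $r\leadsto\mathrm{inl}\,a$ with $a\Vdash B$ or $r\leadsto\mathrm{inr}\,b$ with $b\Vdash C$; $r\Vdash B\to C$ iff $rp\Vdash_{\mathcal M}C$ for all $p\Vdash B$; $r\Vdash\forall xB$ iff $r\bar n\Vdash_{\mathcal M}B[x:=\bar n]$ for all $n$; $r\Vdash\exists xB$ iff $\pi_2r\Vdash B[x:=\pi_1r]$;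 and (MR1) $r\Vdash A\Rightarrow\mathsf{unit}\,r\Vdash_{\mathcal M}A$; (MR2) $r\Vdash B\to C\Rightarrow\mathsf{star}\,r\,p\Vdash_{\mathcal M}C$ for all $p\Vdash_{\mathcal M}B$; (MR3) $p\Vdash_{\mathcal M}B$, $q\Vdash_{\mathcal M}C\Rightarrow\mathsf{merge}\,p\,q\Vdash_{\mathcal M}B\wedge C$.
   Formalization: In a monadic realizability relation, $\Vdash_{\mathcal M}$ is also closed under backward reduction ($t\Vdash_{\mathcal M}A$ whenever $t:\|A\|$, $t\leadsto u$ and $u\Vdash_{\mathcal M}A$), and $r\Vdash\exists xB$ means $\pi_1r\leadsto\bar n$ for some n with $\pi_2r\Vdash B[x:=\bar n]$. The statement above fails without it. *)

From Stdlib Require Import List Arith Relations.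
Import ListNotations.

Inductive ty : Type :=
| TUnit : ty
| TNat : ty
| TAtom : nat -> ty
| TArr : ty -> ty -> ty
| TProd : ty -> ty -> ty
| TSum : ty -> ty -> ty.

(* Terms of T' (de Bruijn indices, Curry style).  [C] is a type of     *)
(* additional constants (e.g. the bounded course-of-values recursor),  *)
(* whose types and reduction rules are parameters [ctype], [crule].    *)
Inductive tm (C : Type) : Type :=
| Var : nat -> tm C
| Lam : tm C -> tm C
| App : tm C -> tm C -> tm C
| Star : tm C
| Pair : tm C -> tm C -> tm C
| Fst : tm C -> tm C
| Snd : tm C -> tm C
| Inl : tm C -> tm C
| Inr : tm C -> tm C
| Case : tm C -> tm C -> tm C -> tm C
| Zero : tm C
| Succ : tm C -> tm C
| Const : C -> tm C.

Arguments Var {C}. Arguments Lam {C}. Arguments App {C}. Arguments Star {C}.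
Arguments Pair {C}. Arguments Fst {C}. Arguments Snd {C}. Arguments Inl {C}.
Arguments Inr {C}. Arguments Case {C}. Arguments Zero {C}. Arguments Succ {C}.
Arguments Const {C}.

Inductive has_type {C : Type} (ctype : C -> ty) : list ty -> tm C -> ty -> Prop :=
| T_Var G n A : nth_error G n = Some A -> has_type ctype G (Var n) A
| T_Lam G t A B : has_type ctype (A :: G) t B -> has_type ctype G (Lam t) (TArr A B)
| T_App G t u A B : has_type ctype G t (TArr A B) -> has_type ctype G u A ->
    has_type ctype G (App t u) B
| T_Star G : has_type ctype G Star TUnit
| T_Pair G t u A B : has_type ctype G t A -> has_type ctype G u B ->
    has_type ctype G (Pair t u) (TProd A B)
| T_Fst G t A B : has_type ctype G t (TProd A B) -> has_type ctype G (Fst t) A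
| T_Snd G t A B : has_type ctype G t (TProd A B) -> has_type ctype G (Snd t) B
| T_Inl G t A B : has_type ctype G t A -> has_type ctype G (Inl t) (TSum A B)
| T_Inr G t A B : has_type ctype G t B -> has_type ctype G (Inr t) (TSum A B)
| T_Case G t u v A B D : has_type ctype G t (TSum A B) ->
    has_type ctype (A :: G) u D -> has_type ctype (B :: G) v D ->
    has_type ctype G (Case t u v) D
| T_Zero G : has_type ctype G Zero TNat
| T_Succ G t : has_type ctype G t TNat -> has_type ctype G (Succ t) TNat
| T_Const G c : has_type ctype G (Const c) (ctype c).

Definition up_ren (xi : nat -> nat) : nat -> nat :=
  fun n => match n with 0 => 0 | S m => S (xi m) end.

Fixpoint ren {C} (xi : nat -> nat) (t : tm C) : tm C :=
  match t with
  | Var n => Var (xi n)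
  | Lam t => Lam (ren (up_ren xi) t)
  | App t u => App (ren xi t) (ren xi u)
  | Star => Star
  | Pair t u => Pair (ren xi t) (ren xi u)
  | Fst t => Fst (ren xi t)
  | Snd t => Snd (ren xi t)
  | Inl t => Inl (ren xi t)
  | Inr t => Inr (ren xi t)
  | Case t u v => Case (ren xi t) (ren (up_ren xi) u) (ren (up_ren xi) v)
  | Zero => Zero
  | Succ t => Succ (ren xi t)
  | Const c => Const c
  end.

Definition up_sub {C} (s : nat -> tm C) : nat -> tm C :=
  fun n => match n with 0 => Var 0 | S m => ren S (s m) end.

Fixpoint sub {C} (s : nat -> tm C) (t : tm C) : tm C :=
  match t with
  | Var n => s n
  | Lam t => Lam (sub (up_sub s) t)
  | App t u => App (sub s t) (sub s u)
  | Star => Star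
  | Pair t u => Pair (sub s t) (sub s u)
  | Fst t => Fst (sub s t)
  | Snd t => Snd (sub s t)
  | Inl t => Inl (sub s t)
  | Inr t => Inr (sub s t)
  | Case t u v => Case (sub s t) (sub (up_sub s) u) (sub (up_sub s) v)
  | Zero => Zero
  | Succ t => Succ (sub s t)
  | Const c => Const c
  end.

Definition scons {C} (u : tm C) : nat -> tm C :=
  fun n => match n with 0 => u | S m => Var m end.

Inductive step {C} (crule : tm C -> tm C -> Prop) : tm C -> tm C -> Prop :=
| s_beta t u : step crule (App (Lam t) u) (sub (scons u) t)
| s_fst a b : step crule (Fst (Pair a b)) a
| s_snd a b : step crule (Snd (Pair a b)) b
| s_casel a u v : step crule (Case (Inl a) u v) (sub (scons a) u)
| s_caser a u v : step crule (Case (Inr a) u v) (sub (scons a) v)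
| s_rule t u : crule t u -> step crule t u
| s_lam t t' : step crule t t' -> step crule (Lam t) (Lam t')
| s_app1 t t' u : step crule t t' -> step crule (App t u) (App t' u)
| s_app2 t u u' : step crule u u' -> step crule (App t u) (App t u')
| s_pair1 t t' u : step crule t t' -> step crule (Pair t u) (Pair t' u)
| s_pair2 t u u' : step crule u u' -> step crule (Pair t u) (Pair t u')
| s_fstc t t' : step crule t t' -> step crule (Fst t) (Fst t')
| s_sndc t t' : step crule t t' -> step crule (Snd t) (Snd t')
| s_inl t t' : step crule t t' -> step crule (Inl t) (Inl t')
| s_inr t t' : step crule t t' -> step crule (Inr t) (Inr t')
| s_case1 t t' u v : step crule t t' -> step crule (Case t u v) (Case t' u v)
| s_case2 t u u' v : step crule u u' -> step crule (Case t u v) (Case t u' v)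
| s_case3 t u v v' : step crule v v' -> step crule (Case t u v) (Case t u v')
| s_succ t t' : step crule t t' -> step crule (Succ t) (Succ t').

Definition red {C} (crule : tm C -> tm C -> Prop) : tm C -> tm C -> Prop :=
  clos_refl_trans (tm C) (step crule).

Fixpoint num {C} (n : nat) : tm C :=
  match n with 0 => Zero | S m => Succ (num m) end.

Definition apps {C} (t : tm C) (ps : list (tm C)) : tm C := fold_left App ps t.

Fixpoint arrs (Xs : list ty) (Y : ty) : ty :=
  match Xs with [] => Y | X :: Xs' => TArr X (arrs Xs' Y) end.

Record syn_monad {C : Type} (ctype : C -> ty) (crule : tm C -> tm C -> Prop) :=
  { mT : ty -> ty;
    munit : ty -> tm C;
    mstar : ty -> ty -> tm C;
    mmerge : ty -> ty -> tm C;
    munit_ty : forall X, has_type ctype [] (munit X) (TArr X (mT X));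
    mstar_ty : forall X Y, has_type ctype [] (mstar X Y)
                 (TArr (TArr X (mT Y)) (TArr (mT X) (mT Y)));
    mmerge_ty : forall X Y, has_type ctype [] (mmerge X Y)
                 (TArr (mT X) (TArr (mT Y) (mT (TProd X Y))));
    mlaw_unit_l : forall X a, has_type ctype [] a (mT X) ->
        red crule (App (App (mstar X X) (munit X)) a) a;
    mlaw_unit_r : forall X Y f x, has_type ctype [] f (TArr X (mT Y)) ->
        has_type ctype [] x X ->
        red crule (App (App (mstar X Y) f) (App (munit X) x)) (App f x);
    mlaw_merge : forall X Y x y, has_type ctype [] x X -> has_type ctype [] y Y ->
        red crule (App (App (mmerge X Y) (App (munit X) x)) (App (munit Y) y))
                  (App (munit (TProd X Y)) (Pair x y)) }.

Arguments mT {C ctype crule}. Arguments munit {C ctype crule}.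
Arguments mstar {C ctype crule}. Arguments mmerge {C ctype crule}.

(* star^k at types X1..Xk, Y, defined through an accumulator so that the
   recursion  star^{k+2} f x y = star^{k+1} (λz. f (π1 z) (π2 z)) (merge x y)
   is structural. *)
Fixpoint starAcc {C ctype crule} (M : @syn_monad C ctype crule)
    (X : ty) (rest : list ty) (Y : ty) : tm C :=
  match rest with
  | [] => mstar M X Y
  | X2 :: rest' =>
      Lam (Lam (Lam
        (App (App (starAcc M (TProd X X2) rest' Y)
                  (Lam (App (App (Var 3) (Fst (Var 0))) (Snd (Var 0)))))
             (App (App (mmerge M X X2) (Var 1)) (Var 0)))))
  end.

Definition starK {C ctype crule} (M : @syn_monad C ctype crule)
    (Xs : list ty) (Y : ty) : tm C :=
  match Xs with
  | [] => Lam (Var 0)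
  | X :: rest => starAcc M X rest Y
  end.

Fixpoint lams {C} (n : nat) (t : tm C) : tm C :=
  match n with 0 => t | S m => Lam (lams m t) end.

(* raise^k = λf. star^k (λx1 ... λxk. unit (f x1 ... xk)) *)
Definition raiseK {C ctype crule} (M : @syn_monad C ctype crule)
    (Xs : list ty) (Y : ty) : tm C :=
  let k := length Xs in
  Lam (App (starK M Xs Y)
           (lams k (App (munit M Y)
                        (apps (Var k) (map Var (rev (seq 0 k))))))).

Inductive aterm : Type :=
| AVar : nat -> aterm
| AZero : aterm
| ASucc : aterm -> aterm
| AAdd : aterm -> aterm -> aterm
| AMul : aterm -> aterm -> aterm.

Inductive form : Type :=
| FAtom : (list nat -> bool) -> list aterm -> form
| FAnd : form -> form -> form
| FOr : form -> form -> form
| FImp : form -> form -> form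
| FAll : form -> form
| FEx : form -> form.

Definition FBot : form := FAtom (fun _ => false) [].

Fixpoint aclosed (d : nat) (t : aterm) : Prop :=
  match t with
  | AVar i => i < d
  | AZero => True
  | ASucc t => aclosed d t
  | AAdd t s | AMul t s => aclosed d t /\ aclosed d s
  end.

Fixpoint fclosed (d : nat) (A : form) : Prop :=
  match A with
  | FAtom _ ts => Forall (aclosed d) ts
  | FAnd B C | FOr B C | FImp B C => fclosed d B /\ fclosed d C
  | FAll B | FEx B => fclosed (S d) B
  end.

Definition closed (A : form) : Prop := fclosed 0 A.

Fixpoint anum (n : nat) : aterm :=
  match n with 0 => AZero | S m => ASucc (anum m) end.

Fixpoint asubst (k m : nat) (t : aterm) : aterm :=
  match t with
  | AVar i => if i =? k then anum m else if k <? i then AVar (pred i) else AVar i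
  | AZero => AZero
  | ASucc t => ASucc (asubst k m t)
  | AAdd t s => AAdd (asubst k m t) (asubst k m s)
  | AMul t s => AMul (asubst k m t) (asubst k m s)
  end.

Fixpoint fsubst (k m : nat) (A : form) : form :=
  match A with
  | FAtom P ts => FAtom P (map (asubst k m) ts)
  | FAnd B C => FAnd (fsubst k m B) (fsubst k m C)
  | FOr B C => FOr (fsubst k m B) (fsubst k m C)
  | FImp B C => FImp (fsubst k m B) (fsubst k m C)
  | FAll B => FAll (fsubst (S k) m B)
  | FEx B => FEx (fsubst (S k) m B)
  end.

(* B[x := n̄] where x is the variable bound by the outer quantifier *)
Definition finst (B : form) (n : nat) : form := fsubst 0 n B.

Fixpoint aeval (t : aterm) : nat :=
  match t with
  | AVar _ => 0
  | AZero => 0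
  | ASucc t => S (aeval t)
  | AAdd t s => aeval t + aeval s
  | AMul t s => aeval t * aeval s
  end.

Definition atom_true (P : list nat -> bool) (ts : list aterm) : Prop :=
  P (map aeval ts) = true.

Fixpoint tau (T : ty -> ty) (A : form) : ty :=
  match A with
  | FAtom _ _ => TUnit
  | FAnd B C => TProd (tau T B) (tau T C)
  | FOr B C => TSum (tau T B) (tau T C)
  | FImp B C => TArr (tau T B) (T (tau T C))
  | FAll B => TArr TNat (T (tau T B))
  | FEx B => TProd TNat (tau T B)
  end.

(* Only the values on closed formulas are constrained.                 *)
Record mreal {C : Type} {ctype : C -> ty} {crule : tm C -> tm C -> Prop}
    (M : syn_monad ctype crule) :=
  { rM : form -> tm C -> Prop;
    rR : form -> tm C -> Prop;
    rM_typed : forall A r, rM A r -> has_type ctype [] r (mT M (tau (mT M) A));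
    rR_typed : forall A r, rR A r -> has_type ctype [] r (tau (mT M) A);
    rR_atom : forall P ts r, closed (FAtom P ts) -> has_type ctype [] r TUnit ->
      (rR (FAtom P ts) r <-> red crule r Star /\ atom_true P ts);
    rR_and : forall B D r, closed (FAnd B D) ->
      has_type ctype [] r (tau (mT M) (FAnd B D)) ->
      (rR (FAnd B D) r <-> rR B (Fst r) /\ rR D (Snd r));
    rR_or : forall B D r, closed (FOr B D) ->
      has_type ctype [] r (tau (mT M) (FOr B D)) ->
      (rR (FOr B D) r <->
         (exists a, red crule r (Inl a) /\ rR B a) \/
         (exists b, red crule r (Inr b) /\ rR D b));
    rR_imp : forall B D r, closed (FImp B D) ->
      has_type ctype [] r (tau (mT M) (FImp B D)) ->
      (rR (FImp B D) r <-> forall p, rR B p -> rM D (App r p));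
    rR_all : forall B r, closed (FAll B) ->
      has_type ctype [] r (tau (mT M) (FAll B)) ->
      (rR (FAll B) r <-> forall n, rM (finst B n) (App r (num n)));
    rR_ex : forall B r, closed (FEx B) ->
      has_type ctype [] r (tau (mT M) (FEx B)) ->
      (rR (FEx B) r <-> exists n, red crule (Fst r) (num n) /\ rR (finst B n) (Snd r));
    mr1 : forall A r, closed A -> rR A r -> rM A (App (munit M (tau (mT M) A)) r);
    mr2 : forall B D r p, closed (FImp B D) -> rR (FImp B D) r -> rM B p ->
      rM D (App (App (mstar M (tau (mT M) B) (tau (mT M) D)) r) p);
    mr3 : forall B D p q, closed (FAnd B D) -> rM B p -> rM D q ->
      rM (FAnd B D) (App (App (mmerge M (tau (mT M) B) (tau (mT M) D)) p) q);
    mr_red : forall A t u, closed A -> has_type ctype [] t (mT M (tau (mT M) A)) ->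
      red crule t u -> rM A u -> rM A t }.

Arguments rM {C ctype crule M}. Arguments rR {C ctype crule M}.

(* The monadic arguments are absorbed one at a time.  By definition
   star^{k+2} f q1 q2 qs reduces to star^{k+1} f' (merge q1 q2) qs, where
   f' = λz. f (π1 z) (π2 z); by (MR3) merge q1 q2 realizes A1 ∧ A2, and f' takes
   realizers of A1 ∧ A2, A3, ..., Ak to monadic realizers of B whenever f does so
   for A1, ..., Ak.  When a single argument is left, (MR2) applies, since such an f
   realizes A → B.  Initially f = λx1...xk. unit (r x1 ... xk), which has this
   property by (MR1).  All these identifications hold only up to reduction, and
   are transported by the closure of ⊩_M under backward reduction. *)

From Stdlib Require Import List Arith Lia Relations.
Import ListNotations.

Section Terms.
Context {C : Type}.
Implicit Types (t u r p : tm C) (ps pre : list (tm C)).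

Fixpoint tm_bound (n : nat) t : Prop :=
  match t with
  | Var i => i < n
  | Lam t => tm_bound (S n) t
  | App t u | Pair t u => tm_bound n t /\ tm_bound n u
  | Star | Zero | Const _ => True
  | Fst t | Snd t | Inl t | Inr t | Succ t => tm_bound n t
  | Case t u v => tm_bound n t /\ tm_bound (S n) u /\ tm_bound (S n) v
  end.

Definition tm_closed t : Prop := tm_bound 0 t.

Lemma has_type_bound (ct : C -> ty) G t T : has_type ct G t T -> tm_bound (length G) t.
Proof.
  induction 1; simpl; auto.
  apply nth_error_Some; congruence.
Qed.

Lemma has_type_closed (ct : C -> ty) t T : has_type ct [] t T -> tm_closed t.
Proof. apply has_type_bound. Qed.

Lemma has_type_weaken (ct : C -> ty) G G' t T :
  has_type ct G t T -> has_type ct (G ++ G') t T.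
Proof.
  induction 1; try (econstructor; eauto; fail).
  constructor. rewrite nth_error_app1; auto.
  apply nth_error_Some; congruence.
Qed.

Lemma has_type_closed_weaken (ct : C -> ty) G t T :
  has_type ct [] t T -> has_type ct G t T.
Proof. apply (has_type_weaken ct [] G). Qed.

Lemma up_ren_id_below n xi :
  (forall i, i < n -> xi i = i) -> forall i, i < S n -> up_ren xi i = i.
Proof. intros Hxi [|i] Hi; simpl; auto; rewrite Hxi; auto; lia. Qed.

Lemma ren_bound_id t : forall k xi,
  tm_bound k t -> (forall i, i < k -> xi i = i) -> ren xi t = t.
Proof.
  induction t; simpl; intros k xi Hb Hxi;
    repeat match goal with H : _ /\ _ |- _ => destruct H end;
    f_equal; eauto using up_ren_id_below.
Qed.

Lemma up_sub_id_below n (s : nat -> tm C) :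
  (forall i, i < n -> s i = Var i) -> forall i, i < S n -> up_sub s i = Var i.
Proof. intros Hs [|i] Hi; simpl; auto; rewrite Hs; auto; lia. Qed.

Lemma sub_bound_id t : forall k s,
  tm_bound k t -> (forall i, i < k -> s i = Var i) -> sub s t = t.
Proof.
  induction t; simpl; intros k s Hb Hs;
    repeat match goal with H : _ /\ _ |- _ => destruct H end;
    f_equal; eauto using up_sub_id_below.
Qed.

Lemma ren_closed xi t : tm_closed t -> ren xi t = t.
Proof. intros Ht; apply (ren_bound_id t 0); auto; lia. Qed.

Lemma sub_closed (s : nat -> tm C) t : tm_closed t -> sub s t = t.
Proof. intros Ht; apply (sub_bound_id t 0); auto; lia. Qed.

Lemma map_sub_closed (s : nat -> tm C) ps : Forall tm_closed ps -> map (sub s) ps = ps.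
Proof. induction 1; simpl; f_equal; auto using sub_closed. Qed.

Lemma up_sub_ext (s s' : nat -> tm C) :
  (forall i, s i = s' i) -> forall i, up_sub s i = up_sub s' i.
Proof. intros H [|i]; simpl; auto; rewrite H; auto. Qed.

Lemma sub_ext t : forall s s', (forall i, s i = s' i) -> sub s t = sub s' t.
Proof. induction t; simpl; intros s s' H; f_equal; eauto using up_sub_ext. Qed.

Fixpoint upn (n : nat) (s : nat -> tm C) : nat -> tm C :=
  match n with 0 => s | S m => up_sub (upn m s) end.

Lemma upn_lt n (s : nat -> tm C) : forall i, i < n -> upn n s i = Var i.
Proof.
  induction n; intros [|i] Hi; simpl; try lia; auto.
  rewrite IHn by lia. reflexivity.
Qed.

Lemma upn_scons_closed n p : tm_closed p -> upn n (scons p) n = p.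
Proof. intros Hp; induction n; simpl; auto. rewrite IHn. apply ren_closed; auto. Qed.

Lemma upn_up_sub n (s : nat -> tm C) : forall i, upn n (up_sub s) i = up_sub (upn n s) i.
Proof. induction n; simpl; auto using up_sub_ext. Qed.

Lemma sub_lams n : forall s t, sub s (lams n t) = lams n (sub (upn n s) t).
Proof.
  induction n; simpl; intros; auto.
  rewrite IHn. do 2 f_equal. apply sub_ext, upn_up_sub.
Qed.

Lemma sub_apps (s : nat -> tm C) ps : forall t, sub s (apps t ps) = apps (sub s t) (map (sub s) ps).
Proof. induction ps; simpl; auto. Qed.

(* The variables x1 ... xk bound by [lams k], i.e. the de Bruijn indices k-1, ..., 0. *)
Definition bvars (k : nat) : list (tm C) := map Var (rev (seq 0 k)).

Lemma bvars_S k : bvars (S k) = Var k :: bvars k.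
Proof. unfold bvars. rewrite seq_S, rev_app_distr. reflexivity. Qed.

Lemma map_sub_upn_bvars n (s : nat -> tm C) : map (sub (upn n s)) (bvars n) = bvars n.
Proof.
  unfold bvars. rewrite map_map. apply map_ext_in. intros i Hi.
  apply upn_lt. apply in_rev, in_seq in Hi. lia.
Qed.

Lemma has_type_apps (ct : C -> ty) G ps : forall Ts t U,
  has_type ct G t (arrs Ts U) -> Forall2 (fun p T => has_type ct G p T) ps Ts ->
  has_type ct G (apps t ps) U.
Proof.
  induction ps; intros Ts t U Ht HF; inversion HF; subst; simpl in *; auto.
  eapply IHps; eauto. econstructor; eauto.
Qed.

Lemma has_type_lams (ct : C -> ty) Ts : forall G t T,
  has_type ct (rev Ts ++ G) t T -> has_type ct G (lams (length Ts) t) (arrs Ts T).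
Proof.
  induction Ts; simpl; intros; auto.
  constructor. apply IHTs. rewrite <- app_assoc in H. exact H.
Qed.

Lemma has_type_bvars (ct : C -> ty) Ts : forall G,
  Forall2 (fun p T => has_type ct (rev Ts ++ G) p T) (bvars (length Ts)) Ts.
Proof.
  induction Ts; intros G; simpl; auto.
  rewrite bvars_S. constructor.
  - constructor. rewrite nth_error_app1 by (rewrite length_app, length_rev; simpl; lia).
    rewrite nth_error_app2, length_rev, Nat.sub_diag by (rewrite length_rev; lia).
    reflexivity.
  - rewrite <- app_assoc. apply IHTs.
Qed.

Variable crule : tm C -> tm C -> Prop.

Lemma red_beta t u : red crule (App (Lam t) u) (sub (scons u) t).
Proof. apply rt_step; constructor. Qed.

Lemma red_app_l t t' u : red crule t t' -> red crule (App t u) (App t' u).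
Proof.
  induction 1.
  - apply rt_step, s_app1; auto.
  - apply rt_refl.
  - eapply rt_trans; eauto.
Qed.

Lemma red_apps_l ps : forall t t', red crule t t' -> red crule (apps t ps) (apps t' ps).
Proof. induction ps; simpl; auto using red_app_l. Qed.

Lemma red_apps_lams (U : tm C) r pre ps :
  tm_closed U -> tm_closed r -> Forall tm_closed pre -> Forall tm_closed ps ->
  red crule (apps (lams (length ps) (App U (apps r (pre ++ bvars (length ps))))) ps)
            (App U (apps r (pre ++ ps))).
Proof.
  revert pre; induction ps as [|p ps IH]; intros pre HU Hr Hpre Hps.
  - simpl. rewrite !app_nil_r. apply rt_refl.
  - inversion Hps; subst. simpl length. rewrite bvars_S. cbn [lams].
    change (apps ?x (p :: ps)) with (apps (App x p) ps).
    eapply rt_trans; [apply red_apps_l, red_beta|].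
    rewrite sub_lams. cbn [sub]. rewrite sub_apps, map_app. cbn [map].
    rewrite !sub_closed, map_sub_closed, map_sub_upn_bvars by auto.
    change (sub (upn (length ps) (scons p)) (Var (length ps)))
      with (upn (length ps) (scons p) (length ps)).
    rewrite upn_scons_closed by auto.
    specialize (IH (pre ++ [p])). rewrite <- !app_assoc in IH. apply IH; auto.
    apply Forall_app; auto.
Qed.

End Terms.

Section Monad.
Context {C : Type} {ctype : C -> ty} {crule : tm C -> tm C -> Prop}.
Variable M : syn_monad ctype crule.

Lemma has_type_starAcc Y rest : forall X,
  has_type ctype [] (starAcc M X rest Y)
    (TArr (arrs (X :: rest) (mT M Y)) (arrs (map (mT M) (X :: rest)) (mT M Y))).
Proof.
  induction rest as [|X2 rest IH]; intros X; simpl.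
  - apply mstar_ty.
  - do 3 constructor. econstructor; [econstructor|].
    + apply has_type_closed_weaken, (IH (TProd X X2)).
    + constructor. repeat econstructor.
    + econstructor; [econstructor|]; [apply has_type_closed_weaken, mmerge_ty | ..];
        constructor; reflexivity.
Qed.

Lemma has_type_starK Xs Y :
  has_type ctype [] (starK M Xs Y) (TArr (arrs Xs (mT M Y)) (arrs (map (mT M) Xs) (mT M Y))).
Proof.
  destruct Xs; simpl.
  - repeat constructor.
  - apply has_type_starAcc.
Qed.

Definition tm_uncurry (f : tm C) : tm C := Lam (App (App f (Fst (Var 0))) (Snd (Var 0))).

Lemma has_type_tm_uncurry G f X1 X2 T :
  has_type ctype [] f (TArr X1 (TArr X2 T)) ->
  has_type ctype G (tm_uncurry f) (TArr (TProd X1 X2) T).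
Proof.
  intros Hf. constructor. econstructor; [econstructor|].
  - apply has_type_closed_weaken, Hf.
  - repeat econstructor.
  - repeat econstructor.
Qed.

Lemma red_tm_uncurry f p :
  tm_closed f -> red crule (App (tm_uncurry f) p) (App (App f (Fst p)) (Snd p)).
Proof.
  intros Hf. eapply rt_trans; [apply red_beta|]. cbn [sub scons].
  rewrite sub_closed by auto. apply rt_refl.
Qed.

Lemma red_starAcc_cons X X2 rest Y f q q2 qs :
  tm_closed f -> tm_closed q ->
  red crule (apps (starAcc M X (X2 :: rest) Y) (f :: q :: q2 :: qs))
    (apps (App (App (starAcc M (TProd X X2) rest Y) (tm_uncurry f))
               (App (App (mmerge M X X2) q) q2)) qs).
Proof.
  intros Hf Hq.
  pose proof (has_type_closed _ _ _ (has_type_starAcc Y rest (TProd X X2))) as Hs.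
  pose proof (has_type_closed _ _ _ (mmerge_ty _ _ M X X2)) as Hm.
  cbn [starAcc apps fold_left].
  eapply rt_trans; [apply red_apps_l, red_app_l, red_app_l, red_beta|].
  eapply rt_trans; [apply red_apps_l, red_app_l, red_beta|].
  eapply rt_trans; [apply red_apps_l, red_beta|].
  cbn [sub up_sub scons ren up_ren].
  rewrite ?(sub_closed _ _ Hs), ?(sub_closed _ _ Hm), ?(ren_closed _ _ Hf),
    ?(sub_closed _ _ Hf), ?(ren_closed _ _ Hq), ?(sub_closed _ _ Hq).
  apply rt_refl.
Qed.

(* The argument [λx1 ... λxk. unit (r x1 ... xk)] that [raise^k r] passes to [star^k]. *)
Definition unit_after (k : nat) (Y : ty) (r : tm C) : tm C :=
  lams k (App (munit M Y) (apps r (bvars k))).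

Lemma has_type_unit_after G Xs Y r :
  has_type ctype (rev Xs ++ G) r (arrs Xs Y) ->
  has_type ctype G (unit_after (length Xs) Y r) (arrs Xs (mT M Y)).
Proof.
  intros Hr. apply has_type_lams. econstructor.
  - apply has_type_closed_weaken, munit_ty.
  - eapply has_type_apps; [exact Hr | apply has_type_bvars].
Qed.

Lemma red_unit_after Y r ps :
  tm_closed r -> Forall tm_closed ps ->
  red crule (apps (unit_after (length ps) Y r) ps) (App (munit M Y) (apps r ps)).
Proof.
  intros Hr Hps.
  apply (red_apps_lams _ _ _ []); eauto using has_type_closed, munit_ty.
Qed.

Lemma has_type_raiseK Xs Y r :
  has_type ctype [] r (arrs Xs Y) ->
  has_type ctype [] (App (raiseK M Xs Y) r) (arrs (map (mT M) Xs) (mT M Y)).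
Proof.
  intros Hr. econstructor; [|exact Hr]. constructor. econstructor.
  - apply has_type_closed_weaken, has_type_starK.
  - apply has_type_unit_after. constructor.
    rewrite nth_error_app2, length_rev, Nat.sub_diag by (rewrite length_rev; lia).
    reflexivity.
Qed.

Lemma red_raiseK Xs Y r qs :
  tm_closed r ->
  red crule (apps (App (raiseK M Xs Y) r) qs)
            (apps (App (starK M Xs Y) (unit_after (length Xs) Y r)) qs).
Proof.
  intros Hr. apply red_apps_l. eapply rt_trans; [apply red_beta|].
  unfold raiseK; cbv zeta; fold (@bvars C (length Xs)). cbn [sub].
  rewrite sub_lams. cbn [sub]. rewrite sub_apps.
  rewrite !sub_closed by eauto using has_type_closed, has_type_starK, munit_ty.
  change (sub ?s (Var ?n)) with (s n).
  rewrite upn_scons_closed, map_sub_upn_bvars by auto.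
  apply rt_refl.
Qed.

Variable R : mreal M.

Lemma Forall2_rM_typed As qs :
  Forall2 (rM R) As qs ->
  Forall2 (fun q T => has_type ctype [] q T) qs (map (mT M) (map (tau (mT M)) As)).
Proof. induction 1; simpl; constructor; eauto using rM_typed. Qed.

Lemma Forall2_rR_typed As ps :
  Forall2 (rR R) As ps -> Forall2 (fun p T => has_type ctype [] p T) ps (map (tau (mT M)) As).
Proof. induction 1; simpl; constructor; eauto using rR_typed. Qed.

Lemma Forall2_rR_closed As ps : Forall2 (rR R) As ps -> Forall tm_closed ps.
Proof. induction 1; constructor; eauto using has_type_closed, rR_typed. Qed.

Definition mrealizes_curried (As : list form) (B : form) (f : tm C) : Prop :=
  forall ps, Forall2 (rR R) As ps -> rM R B (apps f ps).

Lemma unit_after_mrealizes As B r :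
  closed B -> has_type ctype [] r (arrs (map (tau (mT M)) As) (tau (mT M) B)) ->
  (forall ps, Forall2 (rR R) As ps -> rR R B (apps r ps)) ->
  mrealizes_curried As B (unit_after (length (map (tau (mT M)) As)) (tau (mT M) B) r).
Proof.
  intros HB Hr Hrr ps Hps.
  assert (Hlen : length (map (tau (mT M)) As) = length ps)
    by (rewrite length_map; eapply Forall2_length; eauto).
  apply (mr_red M R _ _ (App (munit M (tau (mT M) B)) (apps r ps))); auto using mr1.
  - eapply has_type_apps; [|apply Forall2_rR_typed; eauto].
    apply has_type_unit_after, has_type_closed_weaken, Hr.
  - rewrite Hlen. apply red_unit_after; eauto using has_type_closed, Forall2_rR_closed.
Qed.

Lemma tm_uncurry_mrealizes A1 A2 As B f :
  closed A1 -> closed A2 -> closed B ->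
  has_type ctype [] f (arrs (map (tau (mT M)) (A1 :: A2 :: As)) (mT M (tau (mT M) B))) ->
  mrealizes_curried (A1 :: A2 :: As) B f ->
  mrealizes_curried (FAnd A1 A2 :: As) B (tm_uncurry f).
Proof.
  intros HA1 HA2 HB Hf Hfr ps Hps. inversion Hps as [|A p As' ps' Hp Hps']; subst.
  assert (Hpt := rR_typed M R _ _ Hp).
  apply (rR_and M R) in Hp as [Hp1 Hp2]; [|split; auto | exact Hpt].
  apply (mr_red M R _ _ (apps f (Fst p :: Snd p :: ps'))); [exact HB | | |].
  - eapply has_type_apps; [|apply Forall2_rR_typed; eauto].
    apply has_type_tm_uncurry, Hf.
  - change (red crule (apps (App (tm_uncurry f) p) ps')
                      (apps (App (App f (Fst p)) (Snd p)) ps')).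
    apply red_apps_l, red_tm_uncurry. eapply has_type_closed; eauto.
  - apply Hfr. repeat constructor; auto.
Qed.

Lemma starAcc_mrealizes B As : forall A f qs,
  closed B -> Forall closed (A :: As) ->
  has_type ctype [] f (arrs (map (tau (mT M)) (A :: As)) (mT M (tau (mT M) B))) ->
  mrealizes_curried (A :: As) B f ->
  Forall2 (rM R) (A :: As) qs ->
  rM R B (apps (starAcc M (tau (mT M) A) (map (tau (mT M)) As) (tau (mT M) B)) (f :: qs)).
Proof.
  induction As as [|A2 As IH]; intros A f qs HB HAs Hf Hfr Hqs;
    inversion HAs as [|? ? HA HAs']; inversion Hqs as [|? q ? qs' Hq Hqs']; subst.
  - inversion Hqs'; subst. simpl.
    apply (mr2 M R); auto; [split; auto|].
    apply (rR_imp M R); [split; auto | exact Hf |].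
    intros p Hp. apply (Hfr [p]); auto.
  - inversion HAs' as [|? ? HA2 HAs'']; inversion Hqs' as [|? q2 ? qs'' Hq2 Hqs'']; subst.
    apply (mr_red M R _ _ (apps (App (App (starAcc M (TProd (tau (mT M) A) (tau (mT M) A2))
              (map (tau (mT M)) As) (tau (mT M) B)) (tm_uncurry f))
              (App (App (mmerge M (tau (mT M) A) (tau (mT M) A2)) q) q2)) qs'')); auto.
    + change (apps ?s (f :: ?l)) with (apps (App s f) l).
      eapply has_type_apps; [econstructor; [apply has_type_starAcc | exact Hf] |].
      apply (Forall2_rM_typed (A :: A2 :: As)); auto.
    + apply red_starAcc_cons; eauto using has_type_closed, rM_typed.
    + change (TProd (tau (mT M) A) (tau (mT M) A2)) with (tau (mT M) (FAnd A A2)).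
      apply (IH _ _ (_ :: qs'')); auto.
      * constructor; [split|]; auto.
      * apply has_type_tm_uncurry, Hf.
      * apply tm_uncurry_mrealizes; auto.
      * constructor; auto. apply (mr3 M R); auto. split; auto.
Qed.

Lemma starK_mrealizes As B f qs :
  closed B -> Forall closed As ->
  has_type ctype [] f (arrs (map (tau (mT M)) As) (mT M (tau (mT M) B))) ->
  mrealizes_curried As B f ->
  Forall2 (rM R) As qs ->
  rM R B (apps (App (starK M (map (tau (mT M)) As) (tau (mT M) B)) f) qs).
Proof.
  intros HB HAs Hf Hfr Hqs. destruct As as [|A As].
  - inversion Hqs; subst. apply (mr_red M R _ _ f); auto.
    + econstructor; [apply has_type_starK | exact Hf].
    + apply red_beta.
    + apply (Hfr []); auto.
  - exact (starAcc_mrealizes B As A f qs HB HAs Hf Hfr Hqs).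
Qed.

End Monad.

Theorem mainTheorem3 (C : Type) (ctype : C -> ty) (crule : tm C -> tm C -> Prop)
    (M : syn_monad ctype crule) (R : mreal M)
    (As : list form) (B : form) (r : tm C) :
  Forall closed As -> closed B ->
  has_type ctype [] r (arrs (map (tau (mT M)) As) (tau (mT M) B)) ->
  (forall ps : list (tm C),
      Forall2 (fun A p => rR R A p) As ps -> rR R B (apps r ps)) ->
  forall qs : list (tm C),
    Forall2 (fun A q => rM R A q) As qs ->
    rM R B (apps (App (raiseK M (map (tau (mT M)) As) (tau (mT M) B)) r) qs).
Proof.
  intros HAs HB Hr Hrr qs Hqs.
  set (Xs := map (tau (mT M)) As). set (Y := tau (mT M) B).
  apply (mr_red M R _ _ (apps (App (starK M Xs Y) (unit_after M (length Xs) Y r)) qs)); auto.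
  - eapply has_type_apps; [apply has_type_raiseK, Hr | apply (Forall2_rM_typed M R), Hqs].
  - apply red_raiseK. eapply has_type_closed; eauto.
  - apply (starK_mrealizes M R); auto.
    + apply (has_type_unit_after M [] Xs). apply has_type_closed_weaken, Hr.
    + apply (unit_after_mrealizes M R); auto.
Qed.
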